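(* Let $\mathcal{B}_4$, $\pi_{\lambda,\mu}$ ($\lambda\neq0,\mu\in\mathbb{R}$), the group Fourier transform $\pi_{\lambda,\mu}(\kappa)=\hat\kappa(\pi_{\lambda,\mu})$ and the difference operators $\Delta_{x_i}$ be as in the context. Then for suitable distributions $\kappa$ on $\mathcal{B}_4$ (e.g. $\kappa\in\mathcal{S}(\mathbb{R}^4)$), $$\Delta_{x_1}\hat\kappa(\pi_{\lambda,\mu})=\frac{i}{\lambda}\Big(\pi_{\lambda,\mu}(X_3)\pi_{\lambda,\mu}(\kappa)-\pi_{\lambda,\mu}(\kappa)\pi_{\lambda,\mu}(X_3)\Big),$$ where $\pi_{\lambda,\mu}(X_3)$ is the operator of multiplication by $-i\lambda u$, and $$\Delta_{x_2}\hat\kappa(\pi_{\lambda,\mu})=\frac{2\lambda}{i}\,\partial_\mu\,\pi_{\lambda,\mu}(\kappa).$$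
   Context: The Engel group $\mathcal{B}_4$ is $\mathbb{R}^4$ with the law $(x_1,x_2,x_3,x_4)\circ(y_1,y_2,y_3,y_4)=(x_1+y_1,x_2+y_2,x_3+y_3-x_1y_2,x_4+y_4+\frac12x_1^2y_2-x_1y_3)$ and Haar measure the Lebesgue measure. Its left-invariant vector fields are $X_1=\partial_{x_1}$, $X_2=\partial_{x_2}-x_1\partial_{x_3}+\frac{x_1^2}{2}\partial_{x_4}$, $X_3=\partial_{x_3}-x_1\partial_{x_4}$, $X_4=\partial_{x_4}$. For $\lambda\neq0$, $\mu\in\mathbb{R}$, $\pi_{\lambda,\mu}(x)h(u)=\exp\big(i(-\frac{\mu}{2\lambda}x_2+\lambda x_4-\lambda x_3u+\frac{\lambda}{2}x_2u^2)\big)h(u+x_1)$ on $L^2(\mathbb{R})$. The group Fourier transform is $\hat\kappa(\pi_{\lambda,\mu})=\pi_{\lambda,\mu}(\kappa)=\int_{\mathcal{B}_4}\kappa(x)\pi_{\lambda,\mu}(x)^*dx$; explicitly $\pi_{\lambda,\mu}(\kappa)h(u)=\int_{\mathbb{R}^4}\kappa(x)\exp\big(i(\frac{\mu}{2\lambda}x_2-\lambda x_4+\lambda x_3(u-x_1)-\frac{\lambda}{2}x_2(u-x_1)^2)\big)h(u-x_1)\,dx$. The same symbol $\pi_{\lambda,\mu}$ denotes the infinitesimal representation: $\pi_{\lambda,\mu}(X_1)=\partial_u$, $\pi_{\lambda,\mu}(X_2)=\frac{i}{2}(\lambda u^2-\frac{\mu}{\lambda})$, $\pi_{\lambda,\mu}(X_3)=-i\lambda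 u$, $\pi_{\lambda,\mu}(X_4)=i\lambda$ (multiplication operators except the first). The difference operators are defined by $\Delta_{x_i}\hat\kappa(\pi_{\lambda,\mu}):=\pi_{\lambda,\mu}(x_i\kappa)$, $i=1,\dots,4$, where $x_i\kappa$ is $\kappa$ multiplied by the coordinate function $x_i$. $\partial_\mu\pi_{\lambda,\mu}(\kappa)$ denotes the derivative in the parameter $\mu$ of the operator family (applied pointwise to $\pi_{\lambda,\mu}(\kappa)h(u)$). *)

From Stdlib Require Import Reals List.
From Coquelicot Require Import Coquelicot.
Open Scope R_scope.

Definition fun4 := R -> R -> R -> R -> R.

Definition pdiff (j : nat) (f : fun4) : fun4 := fun a b c d =>
  match j with
  | O => Derive (fun t => f t b c d) a
  | 1%nat => Derive (fun t => f a t c d) b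
  | 2%nat => Derive (fun t => f a b t d) c
  | _ => Derive (fun t => f a b c t) d
  end.

Definition pdiffable (j : nat) (f : fun4) (a b c d : R) : Prop :=
  match j with
  | O => ex_derive (fun t => f t b c d) a
  | 1%nat => ex_derive (fun t => f a t c d) b
  | 2%nat => ex_derive (fun t => f a b t d) c
  | _ => ex_derive (fun t => f a b c t) d
  end.

(** iterated partial derivative D^l f (the head of l is applied last) *)
Fixpoint iter_pdiff (l : list nat) (f : fun4) : fun4 :=
  match l with
  | nil => f
  | j :: l' => pdiff j (iter_pdiff l' f)
  end.

Definition schwartz4_real (f : fun4) : Prop :=
  (forall (l : list nat) (j : nat) (a b c d : R), pdiffable j (iter_pdiff l f) a b c d) /\
  (forall (l : list nat) (n : nat), exists M : R, forall a b c d : R,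
     (1 + a ^ 2 + b ^ 2 + c ^ 2 + d ^ 2) ^ n * Rabs (iter_pdiff l f a b c d) <= M).

Definition schwartz4 (k : R -> R -> R -> R -> C) : Prop :=
  schwartz4_real (fun a b c d => Re (k a b c d)) /\
  schwartz4_real (fun a b c d => Im (k a b c d)).

Definition schwartz1_real (g : R -> R) : Prop :=
  (forall (k : nat) (x : R), ex_derive (Derive_n g k) x) /\
  (forall (k n : nat), exists M : R, forall x : R, (1 + x ^ 2) ^ n * Rabs (Derive_n g k x) <= M).

Definition schwartz1 (h : R -> C) : Prop :=
  schwartz1_real (fun x => Re (h x)) /\ schwartz1_real (fun x => Im (h x)).

Definition cis (t : R) : C := (cos t, sin t).

Definition intR (f : R -> C) : C :=
  @RInt_gen C_R_CompleteNormedModule f (Rbar_locally m_infty) (Rbar_locally p_infty).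

(** Group Fourier transform  pi_{lambda,mu}(kappa) applied to h, evaluated at u:
    int_{R^4} kappa(x) exp(i(mu/(2 lambda) x2 - lambda x4 + lambda x3 (u-x1)
                         - lambda/2 x2 (u-x1)^2)) h(u-x1) dx
    (written as an iterated integral dx4 dx3 dx2 dx1). *)
Definition piF (lam mu : R) (kappa : R -> R -> R -> R -> C) (h : R -> C) (u : R) : C :=
  intR (fun x1 => intR (fun x2 => intR (fun x3 => intR (fun x4 =>
    Cmult (Cmult (kappa x1 x2 x3 x4)
      (cis (mu / (2 * lam) * x2 - lam * x4 + lam * x3 * (u - x1)
            - lam / 2 * x2 * (u - x1) ^ 2)))
      (h (u - x1)))))).

Definition piX3 (lam : R) (h : R -> C) (u : R) : C :=
  Cmult (Copp (Cmult Ci (RtoC (lam * u)))) (h u).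

Definition Delta_x1 (lam mu : R) (kappa : R -> R -> R -> R -> C) :=
  piF lam mu (fun x1 x2 x3 x4 => Cmult (RtoC x1) (kappa x1 x2 x3 x4)).
Definition Delta_x2 (lam mu : R) (kappa : R -> R -> R -> R -> C) :=
  piF lam mu (fun x1 x2 x3 x4 => Cmult (RtoC x2) (kappa x1 x2 x3 x4)).

From Stdlib Require Import Reals Lra Lia Psatz FunctionalExtensionality.
From Coquelicot Require Import Coquelicot.
Open Scope R_scope.

(* Both identities hold between integrands.  In the phase of pi_{lam,mu}(kappa) the
   variable u enters through lam x3 (u - x1), so (-i lam u) - (-i lam (u - x1)) = -i lam x1
   turns x1 kappa into (i/lam) [pi(X3), pi(kappa)]; and d/dmu of the phase is x2 / (2 lam).
   What has to be justified is passing these identities through the iterated improper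
   Riemann integral.  Every integrand is a Schwartz function times a factor of polynomial
   growth, so it is bounded, together with its local Lipschitz constant, by a multiple of
   prod_i (1 + x_i^2)^-1.  This domination is inherited by each partial integral, which gives
   integrability at every level and linearity of the iterated integral; combined with
   |e^(it) - 1 - it| <= 3 t^2 it gives a quadratic bound on the remainder of the difference
   quotient in mu. *)

Lemma Rabs_sub_le_derive_bound (f f' : R -> R) K a b :
  (forall c, Rmin a b <= c <= Rmax a b -> derivable_pt_lim f c (f' c)) ->
  (forall c, Rmin a b <= c <= Rmax a b -> Rabs (f' c) <= K) ->
  Rabs (f a - f b) <= K * Rabs (a - b).
Proof.
  intros Hf HK. rewrite Rmin_comm, Rmax_comm in Hf, HK.
  destruct (MVT_abs f f' b a Hf) as [c [-> Hc]].
  apply Rmult_le_compat_r; [apply Rabs_pos | now apply HK].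
Qed.

Lemma Rabs_sub_le_between s s' t : Rmin s s' <= t <= Rmax s s' -> Rabs (s - t) <= Rabs (s - s').
Proof.
  unfold Rmin, Rmax. intros Ht. destruct Rle_dec; unfold Rabs; repeat destruct Rcase_abs; lra.
Qed.

Lemma sq_le_of_close a a' : Rabs (a - a') <= 1 -> a' ^ 2 <= 2 * a ^ 2 + 2.
Proof.
  intros H. assert ((a - a') ^ 2 <= 1) by (rewrite <- pow2_abs; pose proof (Rabs_pos (a - a')); nra).
  pose proof (pow2_ge_0 (2 * a - a')). nra.
Qed.

Lemma Rabs_le_1_add_sq x : Rabs x <= 1 + x ^ 2.
Proof. unfold Rabs. destruct Rcase_abs; nra. Qed.

Lemma Rabs_sin_sub_le a b : Rabs (sin a - sin b) <= Rabs (a - b).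
Proof.
  rewrite <- (Rmult_1_l (Rabs (a - b))).
  apply (Rabs_sub_le_derive_bound sin cos).
  - intros c _. apply derivable_pt_lim_sin.
  - intros c _. apply Rabs_le, COS_bound.
Qed.

Lemma Rabs_cos_sub_le a b : Rabs (cos a - cos b) <= Rabs (a - b).
Proof.
  rewrite <- (Rmult_1_l (Rabs (a - b))).
  apply (Rabs_sub_le_derive_bound cos (fun x => - sin x)).
  - intros c _. apply derivable_pt_lim_cos.
  - intros c _. rewrite Rabs_Ropp. apply Rabs_le, SIN_bound.
Qed.

Lemma Rabs_cos_sub1_le x : Rabs (cos x - 1) <= x ^ 2 / 2.
Proof.
  replace x with (2 * (x / 2)) at 1 by field. rewrite cos_2a_sin.
  pose proof (Rabs_sin_sub_le (x / 2) 0) as Hs.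
  rewrite sin_0, !Rminus_0_r in Hs.
  assert (Rabs (sin (x / 2)) * Rabs (sin (x / 2)) <= Rabs (x / 2) * Rabs (x / 2))
    by (pose proof (Rabs_pos (sin (x / 2))); apply Rmult_le_compat; auto).
  rewrite <- !Rabs_mult, (Rabs_pos_eq ((x / 2) * (x / 2))) in * by nra.
  replace (1 - 2 * sin (x / 2) * sin (x / 2) - 1) with (- (2 * (sin (x / 2) * sin (x / 2)))) by ring.
  rewrite Rabs_Ropp, Rabs_mult, Rabs_pos_eq by lra. nra.
Qed.

Lemma Rabs_sin_sub_id_le x : Rabs (sin x - x) <= 2 * x ^ 2.
Proof.
  assert (Hx2 : x ^ 2 = Rabs x * Rabs x) by (rewrite <- pow2_abs; ring).
  destruct (Rle_lt_dec (Rabs x) 1) as [Hx | Hx].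
  - replace (sin x - x) with ((sin x - x) - (sin 0 - 0)) by (rewrite sin_0; ring).
    eapply Rle_trans.
    { apply (Rabs_sub_le_derive_bound (fun t => sin t - t) (fun t => cos t - 1) (x ^ 2 / 2)).
      - intros c _. apply (derivable_pt_lim_minus sin id);
          [apply derivable_pt_lim_sin | apply derivable_pt_lim_id].
      - intros c Hc. eapply Rle_trans; [apply Rabs_cos_sub1_le|].
        assert (Rabs c <= Rabs x)
          by (unfold Rmin, Rmax in Hc; destruct Rle_dec; unfold Rabs; repeat destruct Rcase_abs; lra).
        rewrite <- (pow2_abs c), Hx2. pose proof (Rabs_pos c). simpl. nra. }
    rewrite Rminus_0_r, Hx2. pose proof (Rabs_pos x). nra.
  - eapply Rle_trans; [apply Rabs_triang|]. rewrite Rabs_Ropp.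
    pose proof (SIN_bound x). assert (Rabs (sin x) <= 1) by (apply Rabs_le; lra). nra.
Qed.

Lemma Cmod_le_Rabs_Re_Im (z : C) : Cmod z <= Rabs (Re z) + Rabs (Im z).
Proof.
  destruct z as [x y]. unfold Cmod, Re, Im; cbn [fst snd].
  pose proof (Rabs_pos x); pose proof (Rabs_pos y).
  rewrite <- (sqrt_pow2 (Rabs x + Rabs y)) by lra.
  apply sqrt_le_1_alt. rewrite <- (pow2_abs x), <- (pow2_abs y). nra.
Qed.

Lemma C_Re_Im (z : C) : z = (RtoC (Re z) + Ci * RtoC (Im z))%C.
Proof. destruct z as [x y]. apply injective_projections; simpl; ring. Qed.

Lemma Cmod_RtoC_sub (a b : R) : Cmod (RtoC a - RtoC b) = Rabs (a - b).
Proof. rewrite <- RtoC_minus. apply Cmod_R. Qed.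

Lemma Cmod_mul_sub_le (a b a' b' : C) :
  Cmod (a * b - a' * b') <= Cmod (a - a') * Cmod b + Cmod a' * Cmod (b - b').
Proof.
  replace (a * b - a' * b')%C with ((a - a') * b + a' * (b - b'))%C by ring.
  rewrite <- !Cmod_mult. apply Cmod_triangle.
Qed.

Lemma cis_add x y : cis (x + y) = (cis x * cis y)%C.
Proof. unfold cis. rewrite cos_plus, sin_plus. apply injective_projections; simpl; ring. Qed.

Lemma Cmod_cis x : Cmod (cis x) = 1.
Proof.
  unfold Cmod, cis; cbn [fst snd]. rewrite <- sqrt_1. f_equal.
  rewrite <- (sin2_cos2 x). unfold Rsqr. ring.
Qed.

Lemma Cmod_cis_sub_le a b : Cmod (cis a - cis b) <= 2 * Rabs (a - b).
Proof.
  eapply Rle_trans; [apply Cmod_le_Rabs_Re_Im|]. unfold cis, Re, Im; simpl.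
  pose proof (Rabs_cos_sub_le a b); pose proof (Rabs_sin_sub_le a b).
  unfold Rminus in *. lra.
Qed.

Lemma Cmod_cis_sub_taylor_le t : Cmod (cis t - 1 - Ci * RtoC t) <= 3 * t ^ 2.
Proof.
  eapply Rle_trans; [apply Cmod_le_Rabs_Re_Im|].
  replace (Re (cis t - 1 - Ci * RtoC t)) with (cos t - 1) by (unfold Re; simpl; ring).
  replace (Im (cis t - 1 - Ci * RtoC t)) with (sin t - t) by (unfold Im; simpl; ring).
  pose proof (Rabs_cos_sub1_le t); pose proof (Rabs_sin_sub_id_le t).
  pose proof (pow2_ge_0 t). lra.
Qed.

Lemma is_derive_of_quadratic_remainder (f : R -> C) x l K :
  (forall y, Cmod (f y - f x - RtoC (y - x) * l) <= K * (y - x) ^ 2) ->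
  is_derive (V := C_R_NormedModule) f x l.
Proof.
  intros Hrem. split; [apply is_linear_scal_l|].
  intros x' Hx'. apply (is_filter_lim_locally_unique (K := R_AbsRing) (V := R_NormedModule)) in Hx'.
  subst x'. intros eps. set (K' := Rabs K + 1).
  assert (HK : K <= K' /\ 0 < K') by (unfold K'; pose proof (Rle_abs K); pose proof (Rabs_pos K); lra).
  assert (Hd : 0 < eps / K') by (apply Rdiv_lt_0_compat; [apply cond_pos | lra]).
  exists (mkposreal _ Hd). intros y Hy. change (Rabs (y - x) < eps / K') in Hy.
  rewrite <- Cmod_norm, scal_R_Cmult. change (norm (minus y x)) with (Rabs (y - x)).
  eapply Rle_trans; [apply Hrem|].
  rewrite <- (pow2_abs (y - x)). pose proof (Rabs_pos (y - x)).
  assert (K' * Rabs (y - x) <= eps) by (apply (Rmult_le_reg_r (/ K')); [apply Rinv_0_lt_compat; lra|];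
    replace (K' * Rabs (y - x) * / K') with (Rabs (y - x)) by (field; lra); unfold Rdiv in Hy; lra).
  simpl. nra.
Qed.

Lemma continuous_of_local_lipschitz (g : R -> C) t0 K :
  (forall t, Rabs (t - t0) <= 1 -> Cmod (g t0 - g t) <= K * Rabs (t - t0)) ->
  continuous g t0.
Proof.
  intros Hlip. apply (filterlim_locally (F := locally t0) g (g t0)). intros eps.
  set (K' := Rabs K + 1).
  assert (HK : K <= K' /\ 0 < K') by (unfold K'; pose proof (Rle_abs K); pose proof (Rabs_pos K); lra).
  assert (Hd : 0 < Rmin 1 (eps / K'))
    by (apply Rmin_glb_lt; [lra | apply Rdiv_lt_0_compat; [apply cond_pos | lra]]).
  exists (mkposreal _ Hd). intros t Ht. change (Rabs (t - t0) < Rmin 1 (eps / K')) in Ht.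
  pose proof (Rmin_l 1 (eps / K')); pose proof (Rmin_r 1 (eps / K')).
  apply (norm_compat1 (V := C_R_NormedModule)).
  rewrite <- Cmod_norm, <- Cmod_opp. change (minus (g t) (g t0)) with (g t - g t0)%C.
  replace (- (g t - g t0))%C with (g t0 - g t)%C by ring.
  eapply Rle_lt_trans; [apply Hlip; lra|].
  pose proof (Rabs_pos (t - t0)).
  apply Rle_lt_trans with (K' * Rabs (t - t0)); [nra|].
  replace (pos eps) with (K' * (eps / K')) by (field; lra).
  apply Rmult_lt_compat_l; lra.
Qed.

Notation at_bot := (Rbar_locally m_infty).
Notation at_top := (Rbar_locally p_infty).

Definition weight (t : R) : R := / (1 + t ^ 2).

Lemma weight_gt0 t : 0 < weight t.
Proof. unfold weight. apply Rinv_0_lt_compat. nra. Qed.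

Lemma weight_continuous t : continuous weight t.
Proof. apply continuity_pt_filterlim, continuity_pt_inv; [reg | nra]. Qed.

Lemma is_RInt_weight a b : is_RInt weight a b (atan b - atan a).
Proof.
  apply (is_RInt_derive atan weight).
  - intros x _. apply is_derive_Reals, derivable_pt_lim_atan.
  - intros x _. apply weight_continuous.
Qed.

Lemma atan_le a b : a <= b -> atan a <= atan b.
Proof. intros [H | ->]; [left; apply atan_increasing, H | lra]. Qed.

Lemma atan_tails eps : 0 < eps -> exists T,
  (forall x, T < x -> PI / 2 - atan x < eps) /\ (forall x, x < - T -> atan x + PI / 2 < eps).
Proof.
  intros Heps. set (e := Rmin eps 1).
  assert (He : 0 < e <= eps /\ e <= 1) by (unfold e; split; [split|];
    [apply Rmin_glb_lt; lra | apply Rmin_l | apply Rmin_r]).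
  assert (Hatan : atan (tan (PI / 2 - e)) = PI / 2 - e) by (apply atan_tan; pose proof PI2_1; lra).
  exists (tan (PI / 2 - e)). split.
  - intros x Hx. apply atan_increasing in Hx. lra.
  - intros x Hx. apply atan_increasing in Hx. rewrite atan_opp in Hx. lra.
Qed.

Section WeightDominated.
Context {V : CompleteNormedModule R_AbsRing} (g : R -> V) (M : R).
Hypothesis g_continuous : forall t, continuous g t.
Hypothesis norm_g_le : forall t, norm (g t) <= M * weight t.

Let ex_RInt_g a b : ex_RInt g a b := ex_RInt_continuous g a b (fun t _ => g_continuous t).

Lemma norm_RInt_le_weight a b : norm (RInt g a b) <= M * Rabs (atan b - atan a).
Proof.
  assert (Hle : forall a b, a <= b -> norm (RInt g a b) <= M * Rabs (atan b - atan a)).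
  { intros a' b' Hab. pose proof (atan_le a' b' Hab).
    rewrite Rabs_right by lra.
    apply (norm_RInt_le g (fun t => M * weight t) a' b'); auto.
    - apply RInt_correct, ex_RInt_g.
    - apply (is_RInt_scal weight), is_RInt_weight. }
  destruct (Rle_or_lt a b) as [Hab | Hab]; [now apply Hle|].
  rewrite <- opp_RInt_swap by apply ex_RInt_g.
  rewrite (norm_opp (V := CompleteNormedModule.NormedModule R_AbsRing V)).
  rewrite <- Rabs_Ropp, Ropp_minus_distr. apply Hle. lra.
Qed.

Lemma norm_RInt_sub_le_weight a b a' b' :
  norm (minus (RInt g a' b') (RInt g a b))
  <= M * (Rabs (atan a - atan a') + Rabs (atan b' - atan b)).
Proof.
  rewrite <- (RInt_Chasles g a' a b') by apply ex_RInt_g.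
  rewrite <- (RInt_Chasles g a b b') by apply ex_RInt_g.
  replace (minus (plus (RInt g a' a) (plus (RInt g a b) (RInt g b b'))) (RInt g a b))
    with (plus (RInt g a' a) (RInt g b b')).
  2:{ rewrite (plus_comm (RInt g a b)), plus_assoc. unfold minus.
      rewrite <- (plus_assoc _ (RInt g a b)).
      now rewrite (plus_opp_r (G := CompleteNormedModule.AbelianGroup R_AbsRing V)), plus_zero_r. }
  rewrite Rmult_plus_distr_l.
  eapply Rle_trans; [apply (norm_triangle (V := CompleteNormedModule.NormedModule R_AbsRing V)) | apply Rplus_le_compat; apply norm_RInt_le_weight].
Qed.

Lemma ex_RInt_gen_weight_dominated : ex_RInt_gen g at_bot at_top.
Proof.
  assert (HM : 0 <= M).
  { pose proof (norm_g_le 0). pose proof (norm_ge_0 (g 0)). pose proof (weight_gt0 0). nra. }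
  apply (filterlimi_locally_cauchy (F := filter_prod at_bot at_top)
           (fun ab => is_RInt g (fst ab) (snd ab))).
  - exists (fun _ => True) (fun _ => True); try (exists 0; auto).
    intros a b _ _. split; [exists (RInt g a b); apply RInt_correct, ex_RInt_g|].
    intros y1 y2 H1%is_RInt_unique H2%is_RInt_unique. congruence.
  - intros eps. set (d := eps / (2 * (M + 1))).
    assert (Hd : 0 < d) by (apply Rdiv_lt_0_compat; [apply cond_pos | lra]).
    destruct (atan_tails d Hd) as [T [Htop Hbot]].
    exists (fun ab => fst ab < - T /\ T < snd ab). split.
    { exists (fun a => a < - T) (fun b => T < b); [now exists (- T) | now exists T | auto]. }
    intros [a b] [a' b'] [Ha Hb] [Ha' Hb'] y y' <-%is_RInt_unique <-%is_RInt_unique.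
    apply (norm_compat1 (V := CompleteNormedModule.NormedModule R_AbsRing V)).
    eapply Rle_lt_trans; [apply norm_RInt_sub_le_weight|]. simpl in *.
    pose proof (Htop b Hb); pose proof (Htop b' Hb'); pose proof (Hbot a Ha); pose proof (Hbot a' Ha').
    pose proof (atan_bound a); pose proof (atan_bound a');
    pose proof (atan_bound b); pose proof (atan_bound b').
    assert (Rabs (atan a - atan a') + Rabs (atan b' - atan b) <= 2 * d)
      by (unfold Rabs; repeat destruct Rcase_abs; lra).
    assert (Heps : 2 * d * (M + 1) = eps) by (unfold d; field; lra).
    pose proof (cond_pos eps). nra.
Qed.

End WeightDominated.

Definition dominated (g : R -> C) (M : R) : Prop :=
  (forall t, continuous g t) /\ (forall t, Cmod (g t) <= M * weight t).

Definition weight_integral : R := RInt_gen (V := R_CompleteNormedModule) weight at_bot at_top.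

Lemma is_RInt_gen_weight : is_RInt_gen weight at_bot at_top weight_integral.
Proof.
  apply (RInt_gen_correct (V := R_CompleteNormedModule)).
  apply (ex_RInt_gen_weight_dominated (V := R_CompleteNormedModule) weight 1).
  - apply weight_continuous.
  - intros t. rewrite Rmult_1_l. pose proof (weight_gt0 t).
    apply Req_le, Rabs_pos_eq. lra.
Qed.

Lemma weight_integral_ge0 : 0 <= weight_integral.
Proof.
  assert (H : norm (scal 0 weight_integral) <= weight_integral).
  { apply (RInt_gen_norm (V := R_CompleteNormedModule) (Fa := at_bot) (Fb := at_top)
      (fun t => scal 0 (weight t)) weight).
    - exists (fun a => a < 0) (fun b => 0 < b); try (exists 0; auto). simpl; intros; lra.
    - exists (fun _ => True) (fun _ => True); try (exists 0; auto).
      intros a b _ _ t _. change (Rabs (0 * weight t) <= weight t).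
      rewrite Rmult_0_l, Rabs_R0. apply Rlt_le, weight_gt0.
    - apply (is_RInt_gen_scal weight), is_RInt_gen_weight.
    - apply is_RInt_gen_weight. }
  change (Rabs (0 * weight_integral) <= weight_integral) in H.
  now rewrite Rmult_0_l, Rabs_R0 in H.
Qed.

Lemma is_RInt_gen_intR g M : dominated g M ->
  is_RInt_gen (V := C_R_NormedModule) g at_bot at_top (intR g).
Proof.
  intros [Hc Hb]. apply (RInt_gen_correct (V := C_R_CompleteNormedModule)).
  apply (ex_RInt_gen_weight_dominated (V := C_R_CompleteNormedModule) g M Hc).
  intros t. rewrite <- Cmod_norm. apply Hb.
Qed.

Lemma Cmod_intR_le g M : dominated g M -> Cmod (intR g) <= M * weight_integral.
Proof.
  intros Hg. rewrite Cmod_norm.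
  apply (RInt_gen_norm (V := C_R_CompleteNormedModule) (Fa := at_bot) (Fb := at_top)
    g (fun t => M * weight t)).
  - exists (fun a => a < 0) (fun b => 0 < b); try (exists 0; auto).
    simpl; intros; lra.
  - exists (fun _ => True) (fun _ => True); try (exists 0; auto).
    intros; rewrite <- Cmod_norm. apply Hg.
  - now apply (is_RInt_gen_intR g M).
  - apply (is_RInt_gen_scal weight), is_RInt_gen_weight.
Qed.

Lemma is_RInt_Cmult (g : R -> C) c a b l :
  is_RInt (V := C_R_NormedModule) g a b l ->
  is_RInt (V := C_R_NormedModule) (fun t => c * g t)%C a b (c * l)%C.
Proof.
  intros H.
  pose proof (is_RInt_fct_extend_fst (U := R_NormedModule) (V := R_NormedModule) g a b l H) as H1.
  pose proof (is_RInt_fct_extend_snd (U := R_NormedModule) (V := R_NormedModule) g a b l H) as H2.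
  destruct c as [c1 c2], l as [l1 l2]; simpl in H1, H2.
  apply (is_RInt_fct_extend_pair (U := R_NormedModule) (V := R_NormedModule)); simpl.
  - apply (is_RInt_ext (V := R_NormedModule) (fun t => minus (scal c1 (fst (g t))) (scal c2 (snd (g t))))).
    { intros t _. now destruct (g t). }
    apply (is_RInt_minus (V := R_NormedModule)); now apply (is_RInt_scal (V := R_NormedModule)).
  - apply (is_RInt_ext (V := R_NormedModule) (fun t => plus (scal c1 (snd (g t))) (scal c2 (fst (g t))))).
    { intros t _. destruct (g t); simpl. unfold plus, scal; simpl. unfold mult; simpl. ring. }
    replace (c1 * l2 + c2 * l1) with (plus (scal c1 l2) (scal c2 l1)) by reflexivity.
    apply (is_RInt_plus (V := R_NormedModule)); now apply (is_RInt_scal (V := R_NormedModule)).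
Qed.

Lemma is_RInt_gen_Cmult {Fa Fb : (R -> Prop) -> Prop} {FFa : Filter Fa} {FFb : Filter Fb}
  (g : R -> C) c l :
  is_RInt_gen (V := C_R_NormedModule) g Fa Fb l ->
  is_RInt_gen (V := C_R_NormedModule) (fun t => c * g t)%C Fa Fb (c * l)%C.
Proof.
  intros H P HP.
  (* continuity of [z |-> c * z] is that of scalar multiplication in C over itself *)
  pose proof (H (fun y => P (c * y)%C)
    (filterlim_scal_r (K := C_AbsRing) (V := C_NormedModule) c l P HP)) as Hc.
  unfold filtermapi in *. eapply filter_imp; [|exact Hc].
  intros [a b] [y [Hy HPy]]. exists (c * y)%C. split; [now apply is_RInt_Cmult | exact HPy].
Qed.

Lemma intR_lincomb f g M N (alpha beta : C) : dominated f M -> dominated g N ->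
  intR (fun t => alpha * f t + beta * g t)%C = (alpha * intR f + beta * intR g)%C.
Proof.
  intros Hf Hg. unfold intR at 1. apply (is_RInt_gen_unique (V := C_R_CompleteNormedModule)).
  apply (is_RInt_gen_plus (V := C_R_NormedModule) (fun t => alpha * f t)%C (fun t => beta * g t)%C);
    apply is_RInt_gen_Cmult; [apply (is_RInt_gen_intR f M Hf) | apply (is_RInt_gen_intR g N Hg)].
Qed.

Lemma intR_sub f g M N : dominated f M -> dominated g N ->
  intR (fun t => f t - g t)%C = (intR f - intR g)%C.
Proof.
  intros Hf Hg.
  replace (fun t => f t - g t)%C with (fun t => 1 * f t + (-1) * g t)%C
    by (apply functional_extensionality; intros; ring).
  rewrite (intR_lincomb f g M N _ _ Hf Hg). ring.
Qed.

Record wspace := WSpace {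
  wpoint :> Type;
  wt : wpoint -> R;
  wdist : wpoint -> wpoint -> R;
  wdist_ge0 : forall p q, 0 <= wdist p q;
  wdist_self : forall p, wdist p p = 0 }.

Definition unit_wspace : wspace :=
  {| wpoint := unit; wt := fun _ => 1; wdist := fun _ _ => 0;
     wdist_ge0 := fun _ _ => Rle_refl 0; wdist_self := fun _ => eq_refl |}.

Definition ext_wspace (S : wspace) : wspace.
Proof.
  refine {| wpoint := S * R; wt := fun q => wt S (fst q) * weight (snd q);
            wdist := fun q q' => wdist S (fst q) (fst q') + Rabs (snd q - snd q') |}.
  - intros; apply Rplus_le_le_0_compat; [apply wdist_ge0 | apply Rabs_pos].
  - intros [p t]; simpl. rewrite wdist_self, Rminus_diag, Rabs_R0. ring.
Defined.

(* The local Lipschitz bound is what survives integration in one variable: it makes the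
   partial integrals continuous, hence Riemann integrable in the next variable. *)
Definition lip_bounded (S : wspace) (phi : S -> R) (f : S -> C) : Prop :=
  exists M, 0 <= M /\ forall p, Cmod (f p) <= M * phi p /\
    forall p', wdist S p p' <= 1 -> Cmod (f p - f p') <= M * wdist S p p' * phi p.

Lemma Cmod_lincomb_le (alpha beta x y : C) :
  Cmod (alpha * x + beta * y) <= Cmod alpha * Cmod x + Cmod beta * Cmod y.
Proof. rewrite <- !Cmod_mult. apply Cmod_triangle. Qed.

Section LipBounded.
Variable S : wspace.

Lemma lip_bounded_lincomb phi f g alpha beta :
  lip_bounded S phi f -> lip_bounded S phi g ->
  lip_bounded S phi (fun p => alpha * f p + beta * g p)%C.
Proof.
  intros [M [HM Hf]] [N [HN Hg]].
  pose proof (Cmod_ge_0 alpha) as Ha; pose proof (Cmod_ge_0 beta) as Hb.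
  exists (Cmod alpha * M + Cmod beta * N). split; [nra|]. intros p.
  destruct (Hf p) as [Hf1 Hf2], (Hg p) as [Hg1 Hg2]. split.
  - eapply Rle_trans; [apply Cmod_lincomb_le|].
    pose proof (Rmult_le_compat_l _ _ _ Ha Hf1); pose proof (Rmult_le_compat_l _ _ _ Hb Hg1). nra.
  - intros p' Hp. specialize (Hf2 p' Hp); specialize (Hg2 p' Hp).
    replace (alpha * f p + beta * g p - (alpha * f p' + beta * g p'))%C
      with (alpha * (f p - f p') + beta * (g p - g p'))%C by ring.
    eapply Rle_trans; [apply Cmod_lincomb_le|].
    pose proof (Rmult_le_compat_l _ _ _ Ha Hf2); pose proof (Rmult_le_compat_l _ _ _ Hb Hg2). nra.
Qed.

Lemma lip_bounded_le phi psi K f : 0 <= K -> (forall p, phi p <= K * psi p) ->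
  lip_bounded S phi f -> lip_bounded S psi f.
Proof.
  intros HK Hle [M [HM Hf]]. exists (M * K). split; [nra|]. intros p.
  destruct (Hf p) as [Hf1 Hf2]. pose proof (Rmult_le_compat_l _ _ _ HM (Hle p)). split.
  - nra.
  - intros p' Hp. pose proof (wdist_ge0 S p p').
    eapply Rle_trans; [apply (Hf2 p' Hp)|]. nra.
Qed.

Lemma lip_bounded_mul phi psi K f g : 0 <= K ->
  (forall p p', wdist S p p' <= 1 -> phi p' <= K * phi p) ->
  lip_bounded S phi f -> lip_bounded S psi g ->
  lip_bounded S (fun p => phi p * psi p) (fun p => f p * g p)%C.
Proof.
  intros HK Hphi [M [HM Hf]] [N [HN Hg]]. exists (M * N * (1 + K)). split.
  { pose proof (Rmult_le_pos _ _ HM HN). nra. }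
  intros p. destruct (Hf p) as [Hf1 Hf2], (Hg p) as [Hg1 Hg2].
  pose proof (Cmod_ge_0 (f p)) as Hf0; pose proof (Cmod_ge_0 (g p)) as Hg0.
  assert (Hfg : Cmod (f p) * Cmod (g p) <= M * phi p * (N * psi p))
    by (apply Rmult_le_compat; auto).
  split.
  - rewrite Cmod_mult. pose proof (Rmult_le_pos _ _ Hf0 Hg0). nra.
  - intros p' Hp. destruct (Hf p') as [Hf1' _].
    specialize (Hf2 p' Hp); specialize (Hg2 p' Hp); specialize (Hphi p p' Hp).
    pose proof (Cmod_ge_0 (f p')); pose proof (Cmod_ge_0 (f p - f p')).
    pose proof (Cmod_ge_0 (g p - g p')); pose proof (wdist_ge0 S p p').
    eapply Rle_trans; [apply Cmod_mul_sub_le|].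
    assert (T1 : Cmod (f p - f p') * Cmod (g p) <= M * wdist S p p' * phi p * (N * psi p))
      by (apply Rmult_le_compat; auto).
    assert (T2 : Cmod (f p') * Cmod (g p - g p') <= M * (K * phi p) * (N * wdist S p p' * psi p)).
    { apply Rmult_le_compat; auto. eapply Rle_trans; [exact Hf1'|]. nra. }
    assert (0 <= M * N * wdist S p p' * phi p * psi p).
    { replace (M * N * wdist S p p' * phi p * psi p)
        with (wdist S p p' * (M * phi p * (N * psi p))) by ring.
      apply Rmult_le_pos; [lra | nra]. }
    nra.
Qed.

Lemma lip_bounded_const c : lip_bounded S (fun _ => 1) (fun _ => c).
Proof.
  exists (Cmod c). split; [apply Cmod_ge_0|]. intros p. split; [lra|].
  intros p' _. replace (c - c)%C with (RtoC 0) by ring. rewrite Cmod_0.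
  pose proof (Cmod_ge_0 c); pose proof (wdist_ge0 S p p'). nra.
Qed.

End LipBounded.

Definition admissible (S : wspace) (f : S -> C) : Prop := lip_bounded S (wt S) f.

Definition pint {S : wspace} (f : ext_wspace S -> C) (p : S) : C := intR (fun t => f (p, t)).

Section PartialIntegral.
Variables (S : wspace) (f : ext_wspace S -> C).
Hypothesis f_admissible : admissible (ext_wspace S) f.

Lemma admissible_section_continuous p t : continuous (fun t => f (p, t)) t.
Proof.
  destruct f_admissible as [M [HM Hf]].
  apply (continuous_of_local_lipschitz _ t (M * wt S p * weight t)).
  intros t' Ht'. destruct (Hf (p, t)) as [_ H].
  specialize (H (p, t')). simpl in H. rewrite wdist_self, Rplus_0_l, Rabs_minus_sym in H.
  eapply Rle_trans; [apply H, Ht'|]. right; ring.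
Qed.

Lemma dominated_section p B : (forall t, Cmod (f (p, t)) <= B * weight t) ->
  dominated (fun t => f (p, t)) B.
Proof. split; [apply admissible_section_continuous | assumption]. Qed.

Lemma Cmod_pint_le B : (forall q, Cmod (f q) <= B * wt (ext_wspace S) q) ->
  forall p, Cmod (pint f p) <= B * weight_integral * wt S p.
Proof.
  intros HB p. eapply Rle_trans.
  - apply (Cmod_intR_le _ (B * wt S p)), dominated_section.
    intros t. rewrite Rmult_assoc. apply (HB (p, t)).
  - right; ring.
Qed.

Lemma admissible_pint : admissible S (pint f).
Proof.
  pose proof weight_integral_ge0.
  destruct f_admissible as [M [HM Hf]].
  exists (M * weight_integral). split; [nra|]. intros p. split.
  - apply Cmod_pint_le. intros q. apply Hf.
  - intros p' Hp. unfold pint.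
    assert (Hsec : forall p, dominated (fun t => f (p, t)) (M * wt S p))
      by (intros p0; apply dominated_section; intros t; rewrite Rmult_assoc; apply (Hf (p0, t))).
    rewrite <- (intR_sub _ _ _ _ (Hsec p) (Hsec p')).
    eapply Rle_trans.
    + apply (Cmod_intR_le _ (M * wdist S p p' * wt S p)). split.
      * intros t. apply (continuous_minus (V := C_R_NormedModule)); apply admissible_section_continuous.
      * intros t. destruct (Hf (p, t)) as [_ Hlip].
        specialize (Hlip (p', t)). simpl in Hlip. rewrite Rminus_diag, Rabs_R0, Rplus_0_r in Hlip.
        rewrite Rmult_assoc. now apply Hlip.
    + right; ring.
Qed.

End PartialIntegral.

Lemma pint_lincomb (S : wspace) (f g : ext_wspace S -> C) alpha beta :
  admissible (ext_wspace S) f -> admissible (ext_wspace S) g ->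
  pint (fun q => alpha * f q + beta * g q)%C = (fun p => alpha * pint f p + beta * pint g p)%C.
Proof.
  intros Hf Hg. apply functional_extensionality. intros p. unfold pint.
  pose proof (dominated_section S f Hf p) as Hfp; pose proof (dominated_section S g Hg p) as Hgp.
  destruct Hf as [M [_ Hf]], Hg as [N [_ Hg]].
  apply (intR_lincomb _ _ (M * wt S p) (N * wt S p));
    [apply Hfp | apply Hgp]; intros t; rewrite Rmult_assoc; [apply (Hf (p, t)) | apply (Hg (p, t))].
Qed.

(* Starting from a one-point space makes the outermost integral another [pint]; [Int4] is then
   convertible to the iterated integral in [piF]. *)
Definition R4_wspace : wspace :=
  ext_wspace (ext_wspace (ext_wspace (ext_wspace unit_wspace))).

Definition Int4 (f : R4_wspace -> C) : C := pint (pint (pint (pint f))) tt.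

Lemma Int4_lincomb f g alpha beta : admissible R4_wspace f -> admissible R4_wspace g ->
  Int4 (fun q => alpha * f q + beta * g q)%C = (alpha * Int4 f + beta * Int4 g)%C.
Proof.
  intros Hf Hg. unfold Int4, R4_wspace in *.
  pose proof (admissible_pint _ _ Hf) as Hf3; pose proof (admissible_pint _ _ Hf3) as Hf2;
  pose proof (admissible_pint _ _ Hf2) as Hf1.
  pose proof (admissible_pint _ _ Hg) as Hg3; pose proof (admissible_pint _ _ Hg3) as Hg2;
  pose proof (admissible_pint _ _ Hg2) as Hg1.
  rewrite (pint_lincomb _ _ _ _ _ Hf Hg), (pint_lincomb _ _ _ _ _ Hf3 Hg3),
    (pint_lincomb _ _ _ _ _ Hf2 Hg2), (pint_lincomb _ _ _ _ _ Hf1 Hg1).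
  reflexivity.
Qed.

Lemma Cmod_Int4_le f B : admissible R4_wspace f ->
  (forall q, Cmod (f q) <= B * wt R4_wspace q) -> Cmod (Int4 f) <= B * weight_integral ^ 4.
Proof.
  intros Hf HB.
  pose proof (admissible_pint _ _ Hf) as Hf3; pose proof (admissible_pint _ _ Hf3) as Hf2;
  pose proof (admissible_pint _ _ Hf2) as Hf1.
  pose proof (Cmod_pint_le _ _ Hf _ HB) as H3.
  pose proof (Cmod_pint_le _ _ Hf3 _ H3) as H2.
  pose proof (Cmod_pint_le _ _ Hf2 _ H2) as H1.
  eapply Rle_trans; [exact (Cmod_pint_le _ _ Hf1 _ H1 tt)|]. right. simpl. ring.
Qed.

Definition x1 (q : R4_wspace) : R := let '((((_, a), _), _), _) := q in a.
Definition x2 (q : R4_wspace) : R := let '((((_, _), b), _), _) := q in b.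
Definition x3 (q : R4_wspace) : R := let '((((_, _), _), c), _) := q in c.
Definition x4 (q : R4_wspace) : R := let '((((_, _), _), _), d) := q in d.

Definition rho (q : R4_wspace) : R := 1 + x1 q ^ 2 + x2 q ^ 2 + x3 q ^ 2 + x4 q ^ 2.

Lemma wdist_R4 q q' : wdist R4_wspace q q' =
  Rabs (x1 q - x1 q') + Rabs (x2 q - x2 q') + Rabs (x3 q - x3 q') + Rabs (x4 q - x4 q').
Proof. destruct q as [[[[[] a] b] c] d], q' as [[[[[] a'] b'] c'] d']. simpl. ring. Qed.

Lemma wt_R4 q : wt R4_wspace q = weight (x1 q) * weight (x2 q) * weight (x3 q) * weight (x4 q).
Proof. destruct q as [[[[[] a] b] c] d]. simpl. ring. Qed.

Lemma rho_ge1 q : 1 <= rho q.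
Proof. unfold rho. pose proof (pow2_ge_0 (x1 q)); pose proof (pow2_ge_0 (x2 q));
  pose proof (pow2_ge_0 (x3 q)); pose proof (pow2_ge_0 (x4 q)). lra. Qed.

Lemma rho_pow_gt0 m q : 0 < rho q ^ m.
Proof. apply pow_lt. pose proof (rho_ge1 q). lra. Qed.

Lemma rho_le_close q q' : wdist R4_wspace q q' <= 1 -> rho q' <= 9 * rho q.
Proof.
  rewrite wdist_R4. intros H.
  pose proof (Rabs_pos (x1 q - x1 q')); pose proof (Rabs_pos (x2 q - x2 q'));
  pose proof (Rabs_pos (x3 q - x3 q')); pose proof (Rabs_pos (x4 q - x4 q')).
  pose proof (sq_le_of_close (x1 q) (x1 q') ltac:(lra));
  pose proof (sq_le_of_close (x2 q) (x2 q') ltac:(lra));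
  pose proof (sq_le_of_close (x3 q) (x3 q') ltac:(lra));
  pose proof (sq_le_of_close (x4 q) (x4 q') ltac:(lra)).
  pose proof (rho_ge1 q). unfold rho in *. lra.
Qed.

Lemma wdist_R4_sym q q' : wdist R4_wspace q q' = wdist R4_wspace q' q.
Proof.
  rewrite !wdist_R4, (Rabs_minus_sym (x1 q)), (Rabs_minus_sym (x2 q)),
    (Rabs_minus_sym (x3 q)), (Rabs_minus_sym (x4 q)). reflexivity.
Qed.

Lemma rho_pow_le_close m q q' : wdist R4_wspace q q' <= 1 -> rho q' ^ m <= 9 ^ m * rho q ^ m.
Proof.
  intros H. rewrite <- Rpow_mult_distr. apply pow_incr.
  pose proof (rho_ge1 q'). pose proof (rho_le_close q q' H). lra.
Qed.

Lemma inv_rho_pow_le_close k q q' : wdist R4_wspace q q' <= 1 -> / rho q' ^ k <= 9 ^ k * / rho q ^ k.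
Proof.
  intros H. rewrite wdist_R4_sym in H.
  pose proof (rho_pow_le_close k q' q H).
  pose proof (rho_pow_gt0 k q'); pose proof (rho_pow_gt0 k q).
  apply (Rmult_le_reg_l (rho q' ^ k * rho q ^ k)); [nra|].
  field_simplify; [nra | lra | lra].
Qed.

Lemma inv_rho_pow4_le_wt q : / rho q ^ 4 <= wt R4_wspace q.
Proof.
  rewrite wt_R4. unfold weight, rho.
  set (a := x1 q); set (b := x2 q); set (c := x3 q); set (d := x4 q).
  pose proof (pow2_ge_0 a); pose proof (pow2_ge_0 b); pose proof (pow2_ge_0 c); pose proof (pow2_ge_0 d).
  rewrite <- !Rinv_mult. apply Rinv_le_contravar; [apply Rmult_lt_0_compat; nra|].
  set (r := 1 + a ^ 2 + b ^ 2 + c ^ 2 + d ^ 2). replace (r ^ 4) with (r * r * r * r) by ring.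
  repeat apply Rmult_le_compat; unfold r; nra.
Qed.

Definition poly_growth (m : nat) (f : R4_wspace -> C) : Prop :=
  lip_bounded R4_wspace (fun q => rho q ^ m) f.

Definition rapid_decay (f : R4_wspace -> C) : Prop :=
  forall k, lip_bounded R4_wspace (fun q => / rho q ^ k) f.

Lemma poly_growth_le m n f : (m <= n)%nat -> poly_growth m f -> poly_growth n f.
Proof.
  intros Hmn. apply (lip_bounded_le R4_wspace _ _ 1); [lra|]. intros q. rewrite Rmult_1_l.
  apply Rle_pow; [apply rho_ge1 | exact Hmn].
Qed.

Lemma poly_growth_mul m n f g : poly_growth m f -> poly_growth n g ->
  poly_growth (m + n) (fun q => f q * g q)%C.
Proof.
  intros Hf Hg. apply (lip_bounded_le R4_wspace (fun q => rho q ^ m * rho q ^ n) _ 1); [lra | |].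
  - intros q. rewrite pow_add. lra.
  - apply (lip_bounded_mul R4_wspace _ _ (9 ^ m)); auto.
    + apply pow_le. lra.
    + intros q q'. apply rho_pow_le_close.
Qed.

Lemma poly_growth_const c : poly_growth 0 (fun _ => c).
Proof. exact (lip_bounded_const R4_wspace c). Qed.

Lemma poly_growth_coord (x : R4_wspace -> R) :
  (forall q, Rabs (x q) <= rho q) -> (forall q q', Rabs (x q - x q') <= wdist R4_wspace q q') ->
  poly_growth 1 (fun q => RtoC (x q)).
Proof.
  intros Hx Hlip. exists 1. split; [lra|]. intros q. rewrite pow_1. split.
  - rewrite Cmod_R, Rmult_1_l. apply Hx.
  - intros q' _. rewrite Cmod_RtoC_sub. pose proof (rho_ge1 q).
    pose proof (wdist_ge0 R4_wspace q q'). pose proof (Hlip q q'). nra.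
Qed.

Ltac coord_growth :=
  apply poly_growth_coord; intros q;
  [ unfold rho; pose proof (pow2_ge_0 (x1 q)); pose proof (pow2_ge_0 (x2 q));
    pose proof (pow2_ge_0 (x3 q)); pose proof (pow2_ge_0 (x4 q));
    match goal with |- Rabs ?t <= _ => pose proof (Rabs_le_1_add_sq t) end; lra
  | intros q'; rewrite wdist_R4;
    pose proof (Rabs_pos (x1 q - x1 q')); pose proof (Rabs_pos (x2 q - x2 q'));
    pose proof (Rabs_pos (x3 q - x3 q')); pose proof (Rabs_pos (x4 q - x4 q')); lra ].

Lemma poly_growth_x1 : poly_growth 1 (fun q => RtoC (x1 q)). Proof. coord_growth. Qed.
Lemma poly_growth_x2 : poly_growth 1 (fun q => RtoC (x2 q)). Proof. coord_growth. Qed.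
Lemma poly_growth_x3 : poly_growth 1 (fun q => RtoC (x3 q)). Proof. coord_growth. Qed.
Lemma poly_growth_x4 : poly_growth 1 (fun q => RtoC (x4 q)). Proof. coord_growth. Qed.

Lemma poly_growth_cis m (phi : R4_wspace -> R) :
  poly_growth m (fun q => RtoC (phi q)) -> poly_growth m (fun q => cis (phi q)).
Proof.
  intros [M [HM Hphi]]. exists (2 * M + 1). split; [lra|]. intros q.
  destruct (Hphi q) as [_ Hlip].
  assert (1 <= rho q ^ m) by (apply pow_R1_Rle, rho_ge1). split.
  - rewrite Cmod_cis. nra.
  - intros q' Hq. specialize (Hlip q' Hq). rewrite Cmod_RtoC_sub in Hlip.
    pose proof (wdist_ge0 R4_wspace q q').
    assert (0 <= wdist R4_wspace q q' * rho q ^ m) by nra.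
    eapply Rle_trans; [apply Cmod_cis_sub_le | nra].
Qed.

Lemma admissible_decay_mul m f g : rapid_decay f -> poly_growth m g ->
  admissible R4_wspace (fun q => f q * g q)%C.
Proof.
  intros Hf Hg.
  apply (lip_bounded_le R4_wspace (fun q => / rho q ^ (m + 4) * rho q ^ m) _ 1); [lra | |].
  - intros q. rewrite Rmult_1_l, pow_add.
    pose proof (rho_pow_gt0 m q); pose proof (rho_pow_gt0 4 q).
    replace (/ (rho q ^ m * rho q ^ 4) * rho q ^ m) with (/ rho q ^ 4)
      by (field; pose proof (rho_ge1 q); split; lra).
    apply inv_rho_pow4_le_wt.
  - apply (lip_bounded_mul R4_wspace _ _ (9 ^ (m + 4))); auto.
    + apply pow_le. lra.
    + intros q q'. apply inv_rho_pow_le_close.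
Qed.

Definition unc4 (f : R -> R -> R -> R -> C) (q : R4_wspace) : C := f (x1 q) (x2 q) (x3 q) (x4 q).

Lemma Rabs_sub_le_decay_along (g : R -> R) (z : R -> R4_wspace) q s s' N k :
  (forall t, ex_derive g t) ->
  (forall t, rho (z t) ^ k * Rabs (Derive g t) <= N) ->
  (forall t, Rmin s s' <= t <= Rmax s s' -> wdist R4_wspace q (z t) <= 1) ->
  Rabs (g s - g s') <= 9 ^ k * N * / rho q ^ k * Rabs (s - s').
Proof.
  intros Hd HN Hz. apply (Rabs_sub_le_derive_bound g (Derive g)).
  - intros c _. apply is_derive_Reals, Derive_correct, Hd.
  - intros c Hc. specialize (HN c).
    pose proof (inv_rho_pow_le_close k q (z c) (Hz c Hc)).
    pose proof (rho_pow_gt0 k (z c)); pose proof (rho_pow_gt0 k q).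
    pose proof (Rabs_pos (Derive g c)).
    assert (HD : Rabs (Derive g c) <= N * / rho (z c) ^ k).
    { apply (Rmult_le_reg_l (rho (z c) ^ k)); [lra|].
      rewrite <- Rmult_assoc, (Rmult_comm _ N), Rmult_assoc, Rinv_r; lra. }
    assert (0 <= N) by nra.
    eapply Rle_trans; [exact HD|].
    replace (9 ^ k * N * / rho q ^ k) with (N * (9 ^ k * / rho q ^ k)) by ring.
    apply Rmult_le_compat_l; lra.
Qed.

Lemma schwartz4_real_first_partials_decay fr k : schwartz4_real fr -> exists N, 0 <= N /\
  forall j a b c d, (j <= 3)%nat ->
  (1 + a ^ 2 + b ^ 2 + c ^ 2 + d ^ 2) ^ k * Rabs (pdiff j fr a b c d) <= N.
Proof.
  intros [_ Hb].
  destruct (Hb (0%nat :: nil)%list k) as [N0 H0]; destruct (Hb (1%nat :: nil)%list k) as [N1 H1];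
  destruct (Hb (2%nat :: nil)%list k) as [N2 H2]; destruct (Hb (3%nat :: nil)%list k) as [N3 H3].
  exists (Rabs N0 + Rabs N1 + Rabs N2 + Rabs N3).
  pose proof (Rle_abs N0); pose proof (Rle_abs N1); pose proof (Rle_abs N2); pose proof (Rle_abs N3);
  pose proof (Rabs_pos N0); pose proof (Rabs_pos N1); pose proof (Rabs_pos N2); pose proof (Rabs_pos N3).
  split; [lra|]. intros j a b c d Hj.
  destruct j as [|[|[|[|j]]]]; [| | | | lia]; eapply Rle_trans;
    [apply H0 | lra | apply H1 | lra | apply H2 | lra | apply H3 | lra].
Qed.

Lemma schwartz4_real_local_lipschitz fr k : schwartz4_real fr -> exists L, 0 <= L /\
  forall q q', wdist R4_wspace q q' <= 1 ->
  Rabs (fr (x1 q) (x2 q) (x3 q) (x4 q) - fr (x1 q') (x2 q') (x3 q') (x4 q'))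
  <= L * wdist R4_wspace q q' * / rho q ^ k.
Proof.
  intros Hfr. destruct (schwartz4_real_first_partials_decay fr k Hfr) as [N [HN HdN]].
  destruct Hfr as [Hd _].
  exists (9 ^ k * N). split; [pose proof (pow_le 9 k ltac:(lra)); nra|].
  intros q q' Hq. rewrite wdist_R4 in *.
  set (L := 9 ^ k * N * / rho q ^ k).
  destruct q as [[[[[] a] b] c] d], q' as [[[[[] a'] b'] c'] d']. cbn [x1 x2 x3 x4] in *.
  pose proof (Rabs_pos (a - a')); pose proof (Rabs_pos (b - b'));
  pose proof (Rabs_pos (c - c')); pose proof (Rabs_pos (d - d')).
  assert (Sa : Rabs (fr a b c d - fr a' b c d) <= L * Rabs (a - a')).
  { apply (Rabs_sub_le_decay_along (fun t => fr t b c d) (fun t => ((((tt, t), b), c), d))).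
    - intros t. apply (Hd nil 0%nat t b c d).
    - intros t. apply (HdN 0%nat t b c d). lia.
    - intros t Ht. rewrite wdist_R4. cbn [x1 x2 x3 x4].
      rewrite !Rminus_diag, !Rabs_R0. pose proof (Rabs_sub_le_between a a' t Ht). lra. }
  assert (Sb : Rabs (fr a' b c d - fr a' b' c d) <= L * Rabs (b - b')).
  { apply (Rabs_sub_le_decay_along (fun t => fr a' t c d) (fun t => ((((tt, a'), t), c), d))).
    - intros t. apply (Hd nil 1%nat a' t c d).
    - intros t. apply (HdN 1%nat a' t c d). lia.
    - intros t Ht. rewrite wdist_R4. cbn [x1 x2 x3 x4].
      rewrite !Rminus_diag, !Rabs_R0. pose proof (Rabs_sub_le_between b b' t Ht). lra. }
  assert (Sc : Rabs (fr a' b' c d - fr a' b' c' d) <= L * Rabs (c - c')).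
  { apply (Rabs_sub_le_decay_along (fun t => fr a' b' t d) (fun t => ((((tt, a'), b'), t), d))).
    - intros t. apply (Hd nil 2%nat a' b' t d).
    - intros t. apply (HdN 2%nat a' b' t d). lia.
    - intros t Ht. rewrite wdist_R4. cbn [x1 x2 x3 x4].
      rewrite !Rminus_diag, !Rabs_R0. pose proof (Rabs_sub_le_between c c' t Ht). lra. }
  assert (Sd : Rabs (fr a' b' c' d - fr a' b' c' d') <= L * Rabs (d - d')).
  { apply (Rabs_sub_le_decay_along (fun t => fr a' b' c' t) (fun t => ((((tt, a'), b'), c'), t))).
    - intros t. apply (Hd nil 3%nat a' b' c' t).
    - intros t. apply (HdN 3%nat a' b' c' t). lia.
    - intros t Ht. rewrite wdist_R4. cbn [x1 x2 x3 x4].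
      pose proof (Rabs_sub_le_between d d' t Ht). lra. }
  apply Rle_trans with (L * Rabs (a - a') + L * Rabs (b - b') + L * Rabs (c - c') + L * Rabs (d - d'));
    [| right; unfold L; ring].
  replace (fr a b c d - fr a' b' c' d')
    with ((fr a b c d - fr a' b c d) + (fr a' b c d - fr a' b' c d)
          + (fr a' b' c d - fr a' b' c' d) + (fr a' b' c' d - fr a' b' c' d')) by ring.
  repeat (eapply Rle_trans; [apply Rabs_triang | apply Rplus_le_compat]); try assumption.
Qed.

Lemma rapid_decay_schwartz4_real fr : schwartz4_real fr ->
  rapid_decay (fun q => RtoC (fr (x1 q) (x2 q) (x3 q) (x4 q))).
Proof.
  intros Hfr k. destruct (schwartz4_real_local_lipschitz fr k Hfr) as [L [HL Hlip]].
  destruct (proj2 Hfr nil k) as [M0 HM0].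
  exists (Rabs M0 + L). split; [pose proof (Rabs_pos M0); lra|]. intros q.
  pose proof (rho_pow_gt0 k q). split.
  - rewrite Cmod_R. specialize (HM0 (x1 q) (x2 q) (x3 q) (x4 q)).
    apply (Rmult_le_reg_l (rho q ^ k)); [lra|].
    replace (rho q ^ k * ((Rabs M0 + L) * / rho q ^ k)) with (Rabs M0 + L) by (field; lra).
    pose proof (Rle_abs M0). unfold rho. simpl in HM0 |- *. lra.
  - intros q' Hq. rewrite Cmod_RtoC_sub. eapply Rle_trans; [apply (Hlip q q' Hq)|].
    pose proof (wdist_ge0 R4_wspace q q'). pose proof (Rabs_pos M0).
    assert (0 <= wdist R4_wspace q q' * / rho q ^ k) by (apply Rmult_le_pos; [lra | apply Rlt_le, Rinv_0_lt_compat; lra]).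
    nra.
Qed.

Lemma rapid_decay_schwartz4 kappa : schwartz4 kappa -> rapid_decay (unc4 kappa).
Proof.
  intros [Hre Him] k.
  replace (unc4 kappa) with (fun q => 1 * RtoC (Re (unc4 kappa q)) + Ci * RtoC (Im (unc4 kappa q)))%C
    by (apply functional_extensionality; intros q; rewrite Cmult_1_l; symmetry; apply C_Re_Im).
  apply lip_bounded_lincomb; [apply (rapid_decay_schwartz4_real _ Hre) | apply (rapid_decay_schwartz4_real _ Him)].
Qed.

Lemma schwartz1_real_lipschitz r : schwartz1_real r ->
  exists K, 0 <= K /\ forall s s', Rabs (r s) <= K /\ Rabs (r s - r s') <= K * Rabs (s - s').
Proof.
  intros [Hd Hb]. destruct (Hb 0%nat 0%nat) as [M0 H0], (Hb 1%nat 0%nat) as [M1 H1].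
  simpl in H0, H1. exists (Rabs M0 + Rabs M1).
  pose proof (Rle_abs M0); pose proof (Rle_abs M1); pose proof (Rabs_pos M0); pose proof (Rabs_pos M1).
  split; [lra|]. intros s s'. split.
  - specialize (H0 s). lra.
  - eapply Rle_trans.
    + apply (Rabs_sub_le_derive_bound r (Derive r) M1).
      * intros c _. apply is_derive_Reals, Derive_correct, (Hd 0%nat c).
      * intros c _. specialize (H1 c). rewrite Rmult_1_l in H1. exact H1.
    + apply Rmult_le_compat_r; [apply Rabs_pos | lra].
Qed.

Lemma poly_growth_schwartz1 h s0 : schwartz1 h -> poly_growth 0 (fun q => h (s0 - x1 q)).
Proof.
  intros [Hre Him].
  assert (Hreal : forall r, schwartz1_real r -> poly_growth 0 (fun q => RtoC (r (s0 - x1 q)))).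
  { intros r Hr. destruct (schwartz1_real_lipschitz r Hr) as [K [HK Hlip]].
    exists K. split; [exact HK|]. intros q. split.
    - rewrite pow_O, Rmult_1_r, Cmod_R. apply (Hlip _ 0).
    - intros q' _. rewrite pow_O, Rmult_1_r, Cmod_RtoC_sub. eapply Rle_trans; [apply Hlip|].
      rewrite wdist_R4. replace (s0 - x1 q - (s0 - x1 q')) with (- (x1 q - x1 q')) by ring.
      rewrite Rabs_Ropp. pose proof (Rabs_pos (x2 q - x2 q')); pose proof (Rabs_pos (x3 q - x3 q'));
      pose proof (Rabs_pos (x4 q - x4 q')). apply Rmult_le_compat_l; lra. }
  replace (fun q => h (s0 - x1 q))
    with (fun q => 1 * RtoC (Re (h (s0 - x1 q)%R)) + Ci * RtoC (Im (h (s0 - x1 q)%R)))%C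
    by (apply functional_extensionality; intros q; rewrite Cmult_1_l; symmetry; apply C_Re_Im).
  apply lip_bounded_lincomb; [apply (Hreal _ Hre) | apply (Hreal _ Him)].
Qed.

Lemma is_derive_Int4 (F : R -> R4_wspace -> C) (G : R4_wspace -> C) c mu K :
  (forall y, admissible R4_wspace (F y)) -> admissible R4_wspace G ->
  (forall y q, Cmod (F y q - F mu q - RtoC (y - mu) * c * G q) <= K * (y - mu) ^ 2 * wt R4_wspace q) ->
  is_derive (V := C_R_NormedModule) (fun y => Int4 (F y)) mu (c * Int4 G)%C.
Proof.
  intros HF HG Hrem. apply (is_derive_of_quadratic_remainder _ _ _ (K * weight_integral ^ 4)).
  intros y.
  assert (Hdiff : admissible R4_wspace (fun q => 1 * F y q + (-1) * F mu q)%C)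
    by (apply lip_bounded_lincomb; apply HF).
  replace (Int4 (F y) - Int4 (F mu) - RtoC (y - mu) * (c * Int4 G))%C
    with (Int4 (fun q => 1 * (1 * F y q + (-1) * F mu q) + (- (RtoC (y - mu) * c)) * G q)%C)
    by (rewrite (Int4_lincomb _ _ _ _ Hdiff HG), (Int4_lincomb _ _ _ _ (HF y) (HF mu)); ring).
  replace (K * weight_integral ^ 4 * (y - mu) ^ 2) with (K * (y - mu) ^ 2 * weight_integral ^ 4) by ring.
  apply Cmod_Int4_le.
  - apply lip_bounded_lincomb; assumption.
  - intros q. eapply Rle_trans; [|apply (Hrem y q)]. right. f_equal. ring.
Qed.

Definition phase (lam mu u a b c d : R) : R :=
  mu / (2 * lam) * b - lam * d + lam * c * (u - a) - lam / 2 * b * (u - a) ^ 2.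

Definition fourier_integrand (lam mu : R) (kappa : R -> R -> R -> R -> C) (g : R -> C) (u : R)
  (q : R4_wspace) : C :=
  (kappa (x1 q) (x2 q) (x3 q) (x4 q) * cis (phase lam mu u (x1 q) (x2 q) (x3 q) (x4 q)) * g (u - x1 q)%R)%C.

Lemma piF_Int4 lam mu kappa g u : piF lam mu kappa g u = Int4 (fourier_integrand lam mu kappa g u).
Proof. reflexivity. Qed.

Lemma poly_growth_phase lam mu u :
  poly_growth 3 (fun q => RtoC (phase lam mu u (x1 q) (x2 q) (x3 q) (x4 q))).
Proof.
  assert (Hu : poly_growth 1 (fun q => 1 * RtoC u + (-1) * RtoC (x1 q))%C).
  { apply lip_bounded_lincomb; [apply (poly_growth_le 0); [lia | apply poly_growth_const] | apply poly_growth_x1]. }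
  set (v := fun q => (1 * RtoC u + (-1) * RtoC (x1 q))%C) in Hu.
  replace (fun q => RtoC (phase lam mu u (x1 q) (x2 q) (x3 q) (x4 q)))
    with (fun q => 1 * (RtoC (mu / (2 * lam)) * RtoC (x2 q) + RtoC (- lam) * RtoC (x4 q))
                 + 1 * (RtoC lam * (RtoC (x3 q) * v q)
                        + RtoC (- (lam / 2)) * (RtoC (x2 q) * (v q * v q))))%C.
  2:{ apply functional_extensionality. intros q. unfold v, phase.
      apply injective_projections; simpl; ring. }
  apply lip_bounded_lincomb; apply lip_bounded_lincomb.
  - apply (poly_growth_le 1); [lia | apply poly_growth_x2].
  - apply (poly_growth_le 1); [lia | apply poly_growth_x4].
  - apply (poly_growth_le 2); [lia | apply (poly_growth_mul 1 1); [apply poly_growth_x3 | exact Hu]].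
  - apply (poly_growth_mul 1 2); [apply poly_growth_x2 | apply (poly_growth_mul 1 1); exact Hu].
Qed.

Definition wave (lam mu u : R) (g : R -> C) (q : R4_wspace) : C :=
  (cis (phase lam mu u (x1 q) (x2 q) (x3 q) (x4 q)) * g (u - x1 q)%R)%C.

Lemma poly_growth_wave lam mu u g m : poly_growth m (fun q => g (u - x1 q)) ->
  poly_growth (3 + m) (wave lam mu u g).
Proof. intros Hg. apply poly_growth_mul; [apply poly_growth_cis, poly_growth_phase | exact Hg]. Qed.

Lemma poly_growth_piX3 lam h u : schwartz1 h -> poly_growth 1 (fun q => piX3 lam h (u - x1 q)).
Proof.
  intros Hh.
  replace (fun q => piX3 lam h (u - x1 q))
    with (fun q => (- (Ci * RtoC lam)) * RtoC (u - x1 q) * h (u - x1 q)%R)%C.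
  2:{ apply functional_extensionality. intros q. unfold piX3. rewrite RtoC_mult. ring. }
  apply (poly_growth_mul 1 0); [|now apply poly_growth_schwartz1].
  apply (poly_growth_mul 0 1); [apply poly_growth_const|].
  replace (fun q => RtoC (u - x1 q)) with (fun q => 1 * RtoC u + (-1) * RtoC (x1 q))%C
    by (apply functional_extensionality; intros q; rewrite RtoC_minus; ring).
  apply lip_bounded_lincomb; [apply (poly_growth_le 0); [lia | apply poly_growth_const] | apply poly_growth_x1].
Qed.

Lemma admissible_schwartz_mul kappa G m : schwartz4 kappa -> poly_growth m G ->
  admissible R4_wspace (fun q => unc4 kappa q * G q)%C.
Proof. intros Hk HG. apply (admissible_decay_mul m); [apply rapid_decay_schwartz4 | ]; assumption. Qed.

Lemma poly_growth_x2_pow n : poly_growth n (fun q => RtoC (x2 q ^ n)).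
Proof.
  induction n as [|n IHn]; [exact (poly_growth_const (RtoC 1))|].
  replace (fun q => RtoC (x2 q ^ S n)) with (fun q => RtoC (x2 q) * RtoC (x2 q ^ n))%C
    by (apply functional_extensionality; intros q; now rewrite <- RtoC_mult).
  apply (poly_growth_mul 1 n); [apply poly_growth_x2 | exact IHn].
Qed.

Lemma admissible_fourier_integrand lam mu kappa g u m : schwartz4 kappa ->
  poly_growth m (fun q => g (u - x1 q)) -> admissible R4_wspace (fourier_integrand lam mu kappa g u).
Proof.
  intros Hk Hg.
  replace (fourier_integrand lam mu kappa g u) with (fun q => unc4 kappa q * wave lam mu u g q)%C
    by (apply functional_extensionality; intros q; unfold fourier_integrand, wave, unc4; ring).
  apply (admissible_schwartz_mul _ _ (3 + m) Hk), poly_growth_wave, Hg.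
Qed.

Lemma x1_commutator_pointwise (lam u a : R) (K E H : C) : lam <> 0 ->
  (RtoC a * K * E * H)%C =
  ((Ci / RtoC lam * - (Ci * RtoC (lam * u))) * (K * E * H)
   + (- (Ci / RtoC lam)) * (K * E * (- (Ci * RtoC (lam * (u - a))) * H)))%C.
Proof.
  intros Hlam. destruct K as [k1 k2], E as [e1 e2], H as [h1 h2].
  apply injective_projections; simpl; field; exact Hlam.
Qed.

Lemma Delta_x1_commutator lam mu kappa h u : lam <> 0 -> schwartz4 kappa -> schwartz1 h ->
  Delta_x1 lam mu kappa h u =
  (Ci / RtoC lam * (piX3 lam (piF lam mu kappa h) u - piF lam mu kappa (piX3 lam h) u))%C.
Proof.
  intros Hlam Hk Hh. unfold Delta_x1, piX3 at 1. rewrite !piF_Int4.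
  set (alpha := (Ci / RtoC lam * - (Ci * RtoC (lam * u)))%C).
  set (beta := (- (Ci / RtoC lam))%C).
  transitivity (Int4 (fun q => alpha * fourier_integrand lam mu kappa h u q
                             + beta * fourier_integrand lam mu kappa (piX3 lam h) u q)%C).
  - f_equal. apply functional_extensionality. intros q.
    unfold fourier_integrand, piX3. apply x1_commutator_pointwise, Hlam.
  - rewrite Int4_lincomb.
    + unfold alpha, beta. ring.
    + apply (admissible_fourier_integrand _ _ _ _ _ 0 Hk), poly_growth_schwartz1, Hh.
    + apply (admissible_fourier_integrand _ _ _ _ _ 1 Hk), poly_growth_piX3, Hh.
Qed.

Lemma mu_remainder_pointwise (lam y mu b : R) (K P E H : C) : lam <> 0 ->
  (K * (P * E) * H - K * P * H - RtoC (y - mu) * (Ci / RtoC (2 * lam)) * (RtoC b * K * P * H))%C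
  = (K * P * H * (E - 1 - Ci * RtoC ((y - mu) / (2 * lam) * b)))%C.
Proof.
  intros Hlam. destruct K as [k1 k2], P as [p1 p2], E as [e1 e2], H as [h1 h2].
  apply injective_projections; simpl; field; exact Hlam.
Qed.

Lemma Cmod_fourier_integrand_remainder_le lam y mu kappa h u q : lam <> 0 ->
  Cmod (fourier_integrand lam y kappa h u q - fourier_integrand lam mu kappa h u q
        - RtoC (y - mu) * (Ci / RtoC (2 * lam))
          * fourier_integrand lam mu (fun a b c d => RtoC b * kappa a b c d)%C h u q)
  <= 3 / (4 * lam ^ 2) * (y - mu) ^ 2 * Cmod (RtoC (x2 q ^ 2) * fourier_integrand lam mu kappa h u q).
Proof.
  intros Hlam. set (theta := (y - mu) / (2 * lam) * x2 q).
  assert (Ephase : phase lam y u (x1 q) (x2 q) (x3 q) (x4 q)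
                   = phase lam mu u (x1 q) (x2 q) (x3 q) (x4 q) + theta)
    by (unfold phase, theta; field; exact Hlam).
  unfold fourier_integrand. rewrite Ephase, cis_add, mu_remainder_pointwise by exact Hlam.
  fold theta. rewrite !Cmod_mult, Cmod_R, Rabs_pos_eq by apply pow2_ge_0.
  set (e := Cmod (kappa (x1 q) (x2 q) (x3 q) (x4 q))
            * Cmod (cis (phase lam mu u (x1 q) (x2 q) (x3 q) (x4 q))) * Cmod (h (u - x1 q))).
  assert (He : 0 <= e) by (unfold e; repeat apply Rmult_le_pos; apply Cmod_ge_0).
  assert (Htheta : theta ^ 2 = (y - mu) ^ 2 / (4 * lam ^ 2) * x2 q ^ 2)
    by (unfold theta; field; exact Hlam).
  eapply Rle_trans; [apply Rmult_le_compat_l; [exact He | apply Cmod_cis_sub_taylor_le]|].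
  rewrite Htheta. right. field. exact Hlam.
Qed.

Lemma admissible_x2_pow_fourier_integrand lam mu kappa h u n : schwartz4 kappa -> schwartz1 h ->
  admissible R4_wspace (fun q => RtoC (x2 q ^ n) * fourier_integrand lam mu kappa h u q)%C.
Proof.
  intros Hk Hh.
  replace (fun q => RtoC (x2 q ^ n) * fourier_integrand lam mu kappa h u q)%C
    with (fun q => unc4 kappa q * (RtoC (x2 q ^ n) * wave lam mu u h q))%C
    by (apply functional_extensionality; intros q; unfold fourier_integrand, wave, unc4; ring).
  apply (admissible_schwartz_mul _ _ (n + (3 + 0)) Hk), poly_growth_mul.
  - apply poly_growth_x2_pow.
  - apply poly_growth_wave, poly_growth_schwartz1, Hh.
Qed.

Lemma Delta_x2_derivative lam mu kappa h u : lam <> 0 -> schwartz4 kappa -> schwartz1 h ->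
  exists d : C,
    is_derive (V := C_R_NormedModule) (fun m : R => piF lam m kappa h u) mu d /\
    Delta_x2 lam mu kappa h u = (RtoC (2 * lam) / Ci * d)%C.
Proof.
  intros Hlam Hk Hh.
  set (G := fourier_integrand lam mu (fun a b c d => RtoC b * kappa a b c d)%C h u).
  assert (HG : admissible R4_wspace G).
  { replace G with (fun q => RtoC (x2 q ^ 1) * fourier_integrand lam mu kappa h u q)%C
      by (apply functional_extensionality; intros q; unfold G, fourier_integrand; rewrite pow_1; ring).
    now apply admissible_x2_pow_fourier_integrand. }
  destruct (admissible_x2_pow_fourier_integrand lam mu kappa h u 2 Hk Hh) as [Msq [_ HMsq]].
  exists (Ci / RtoC (2 * lam) * Int4 G)%C. split.
  - apply (is_derive_Int4 (fun y => fourier_integrand lam y kappa h u) G _ mu (3 / (4 * lam ^ 2) * Msq)).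
    + intros y. apply (admissible_fourier_integrand _ _ _ _ _ 0 Hk), poly_growth_schwartz1, Hh.
    + exact HG.
    + intros y q. eapply Rle_trans; [apply Cmod_fourier_integrand_remainder_le, Hlam|].
      assert (0 <= 3 / (4 * lam ^ 2) * (y - mu) ^ 2).
      { apply Rmult_le_pos; [|apply pow2_ge_0]. pose proof (pow2_gt_0 lam Hlam).
        apply Rlt_le, Rdiv_lt_0_compat; lra. }
      replace (3 / (4 * lam ^ 2) * Msq * (y - mu) ^ 2 * wt R4_wspace q)
        with (3 / (4 * lam ^ 2) * (y - mu) ^ 2 * (Msq * wt R4_wspace q)) by ring.
      apply Rmult_le_compat_l; [assumption | apply HMsq].
  - change (Delta_x2 lam mu kappa h u) with (Int4 G). destruct (Int4 G) as [d1 d2].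
    apply injective_projections; simpl; field; exact Hlam.
Qed.

Theorem mainTheorem2 :
  forall (lam mu : R) (kappa : R -> R -> R -> R -> C) (h : R -> C),
    lam <> 0%R -> schwartz4 kappa -> schwartz1 h ->
    (forall u : R,
       Delta_x1 lam mu kappa h u =
       Cmult (Cdiv Ci (RtoC lam))
         (Cminus (piX3 lam (piF lam mu kappa h) u)
                 (piF lam mu kappa (piX3 lam h) u))) /\
    (forall u : R, exists d : C,
       is_derive (V := C_R_NormedModule) (fun m : R => piF lam m kappa h u) mu d /\
       Delta_x2 lam mu kappa h u = Cmult (Cdiv (RtoC (2 * lam)) Ci) d).
Proof.
  intros lam mu kappa h Hlam Hk Hh. split; intros u.
  - now apply Delta_x1_commutator.
  - now apply Delta_x2_derivative.
Qed.
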